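(* Let $\mathcal A=(\mathbf a,\mathbf b)$ be a binary GCP of length $M$ and let $\mathcal B=(\mathbf c,\mathbf d)$ be a binary $(N,Z)$-CZCP. Let $(\mathbf e,\mathbf f)=\mathrm{Turyn}(\mathcal A,\mathcal B)$, i.e. $$\mathbf e=\mathbf c\otimes\frac{\mathbf a+\mathbf b}2-\overleftarrow{\mathbf d}\otimes\frac{\mathbf b-\mathbf a}2,\qquad \mathbf f=\mathbf d\otimes\frac{\mathbf a+\mathbf b}2+\overleftarrow{\mathbf c}\otimes\frac{\mathbf b-\mathbf a}2 .$$ Then $(\mathbf e,\mathbf f)$ is an $(NM,ZM)$-CZCP.
   Context: A binary GCP of length $M$ is a pair of $\pm1$ sequences with $\rho_{\mathbf a}(\tau)+\rho_{\mathbf b}(\tau)=0$ for all $\tau\ne0$. $\overleftarrow{\mathbf u}$ denotes the reversal of $\mathbf u$ and $\mathbf u\otimes\mathbf v=(u_0\mathbf v,u_1\mathbf v,\dots,u_{N-1}\mathbf v)$ the Kronecker product (so $\mathbf e,\mathbf f$ have length $NM$). Aperiodic correlation of real sequences of length $L$: $\rho_{\mathbf a,\mathbf b}(\tau)=\sum_{k=0}^{L-1-\tau}a_kb_{k+\tau}$ for $0\le\tau\le L-1$, $\rho_{\mathbf a,\mathbf b}(\tau)=\sum_{k=0}^{L-1+\tau}a_{k-\tau}b_k$ for $-(L-1)\le\tau\le-1$, $0$ otherwise; $\rho_{\mathbf a}=\rho_{\mathbf a,\mathbf a}$. CZCP: with $\mathcal T_1=\{1,\dots,Z\}$, $\mathcal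 T_2=\{L-Z,\dots,L-1\}$, a pair $(\mathbf a,\mathbf b)$ of length-$L$ sequences is an $(L,Z)$-CZCP if $\rho_{\mathbf a}(\tau)+\rho_{\mathbf b}(\tau)=0$ for all $|\tau|\in\mathcal T_1\cup\mathcal T_2$ and $\rho_{\mathbf a,\mathbf b}(\tau)+\rho_{\mathbf b,\mathbf a}(\tau)=0$ for all $|\tau|\in\mathcal T_2$. *)

From HB Require Import structures.
From mathcomp Require Import all_boot all_order all_algebra.
Set Implicit Arguments. Unset Strict Implicit. Unset Printing Implicit Defensive.
Import Order.TTheory GRing.Theory Num.Theory.
Local Open Scope ring_scope.

(* Aperiodic cross-correlation rho_{a,b}(tau), L = size a.
   tau = n >= 0 : sum_{k=0}^{L-1-n} a_k b_{k+n}
   tau = -(n+1) : sum_{k=0}^{L-1-(n+1)} a_{k+n+1} b_k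
   (empty sum, i.e. 0, when |tau| >= L). *)
Definition acorr (a b : seq rat) (tau : int) : rat :=
  match tau with
  | Posz n => \sum_(0 <= k < size a - n) a`_k * b`_(k + n)
  | Negz n => \sum_(0 <= k < size a - n.+1) a`_(k + n.+1) * b`_k
  end.

Definition aacorr (a : seq rat) (tau : int) : rat := acorr a a tau.

Definition binary (a : seq rat) : bool := all (fun x => (x == 1) || (x == -1)) a.

Definition binGCP (M : nat) (a b : seq rat) : Prop :=
  [/\ size a = M, size b = M, binary a, binary b &
      forall tau : int, tau != 0 -> aacorr a tau + aacorr b tau = 0].

Definition inT1 (Z n : nat) : bool := (1 <= n <= Z)%N.
Definition inT2 (L Z n : nat) : bool := (L - Z <= n)%N && (n < L)%N.

Definition CZCP (L Z : nat) (a b : seq rat) : Prop :=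
  [/\ size a = L, size b = L,
      (forall tau : int, inT1 Z `|tau|%N || inT2 L Z `|tau|%N ->
         aacorr a tau + aacorr b tau = 0) &
      (forall tau : int, inT2 L Z `|tau|%N ->
         acorr a b tau + acorr b a tau = 0)].

Definition binCZCP (L Z : nat) (a b : seq rat) : Prop :=
  [/\ CZCP L Z a b, binary a & binary b].

Definition kron (u v : seq rat) : seq rat :=
  flatten [seq [seq ui * vj | vj <- v] | ui <- u].

Definition seqadd (u v : seq rat) : seq rat := [seq x.1 + x.2 | x <- zip u v].
Definition seqsub (u v : seq rat) : seq rat := [seq x.1 - x.2 | x <- zip u v].
Definition seqhalf (u : seq rat) : seq rat := [seq x / 2 | x <- u].

Definition turyn_e (a b c d : seq rat) : seq rat :=
  seqsub (kron c (seqhalf (seqadd a b))) (kron (rev d) (seqhalf (seqsub b a))).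
Definition turyn_f (a b c d : seq rat) : seq rat :=
  seqadd (kron d (seqhalf (seqadd a b))) (kron (rev c) (seqhalf (seqsub b a))).

(* Put x = (a + b)/2 and y = (b - a)/2, so that e and f are combinations of the
   Kronecker products of c, d, rev c, rev d with x, y.  A shift n = kM + r of such a
   product splits into shifts k and k + 1 of the outer factors, weighted by shifts r
   and M - r of the inner ones.  In rho_e + rho_f the mixed terms cancel and the
   weight x_j x_j' + y_j y_j' is half of the corresponding term of rho_a + rho_b, so
   by the GCP property only r = 0 survives, leaving a multiple of rho_c + rho_d at k.
   In rho_{e,f} + rho_{f,e} on the upper zone, besides rho_{c,d} + rho_{d,c} the terms
   rho_{c, rev c} - rho_{d, rev d} and rho_{rev c, c} - rho_{rev d, d} appear at shifts
   >= N - Z.  They vanish because the tail conditions of a binary CZCP force c + d or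
   c - d to vanish on the first Z entries (and, by reversal, on the last Z), so there
   d = c or d = -c. *)

From HB Require Import structures.
From mathcomp Require Import all_boot all_order all_algebra.
From mathcomp Require Import zify ring lra.
Set Implicit Arguments. Unset Strict Implicit. Unset Printing Implicit Defensive.
Import Order.TTheory GRing.Theory Num.Theory.
Local Open Scope ring_scope.

Lemma acorr_ge (u v : seq rat) (n : nat) : (size u <= n)%N -> acorr u v n = 0.
Proof. by move=> le_un; rewrite /acorr big_geq //; lia. Qed.

Lemma acorrE (u v : seq rat) (n : nat) : size u = size v ->
  acorr u v n = \sum_(0 <= t < size u) u`_t * v`_(t + n).
Proof.
move=> eq_uv; rewrite /acorr (@big_cat_nat _ _ _ (size u - n) 0 (size u)) ?leq_subr //=.
rewrite [X in _ = _ + X]big_nat_cond [X in _ = _ + X]big1 ?addr0 // => t.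
by case/andP=> /andP[le_t _] _; rewrite [v`__]nth_default ?mulr0 // -eq_uv; lia.
Qed.

Lemma acorrN (u v : seq rat) (n : nat) : size u = size v ->
  acorr u v (Negz n) = acorr v u n.+1.
Proof. by move=> eq_uv; rewrite /acorr eq_uv; apply: eq_big_nat => t _; rewrite mulrC. Qed.

Lemma acorr_rev (u v : seq rat) (n : nat) : size u = size v ->
  acorr (rev u) (rev v) n = acorr v u n.
Proof.
move=> eq_uv; rewrite /acorr size_rev -eq_uv big_nat_rev /=.
apply: eq_big_nat => t /andP[_ lt_t]; rewrite !nth_rev -?eq_uv; try lia.
by rewrite mulrC; congr (_ * _); congr nth; lia.
Qed.

Lemma acorr_rev_swap (u v : seq rat) (n : nat) : size u = size v ->
  acorr u (rev v) n = acorr v (rev u) n.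
Proof.
move=> eq_uv; rewrite /acorr -eq_uv big_nat_rev /=.
apply: eq_big_nat => t /andP[_ lt_t]; rewrite !nth_rev -?eq_uv; try lia.
by rewrite mulrC; congr (_ * _); congr nth; lia.
Qed.

Lemma acorr_rev_swapl (u v : seq rat) (n : nat) : size u = size v ->
  acorr (rev u) v n = acorr (rev v) u n.
Proof. by move=> eq_uv; rewrite -{1}(revK v) acorr_rev_swap ?size_rev // revK. Qed.

Lemma size_seqadd (u v : seq rat) : size (seqadd u v) = minn (size u) (size v).
Proof. by rewrite size_map size_zip. Qed.

Lemma size_seqsub (u v : seq rat) : size (seqsub u v) = minn (size u) (size v).
Proof. by rewrite size_map size_zip. Qed.

Lemma size_seqhalf (u : seq rat) : size (seqhalf u) = size u.
Proof. exact: size_map. Qed.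

Lemma nth_seqadd (u v : seq rat) t : size u = size v -> (seqadd u v)`_t = u`_t + v`_t.
Proof.
move=> eq_uv; have [lt_t|le_t] := ltnP t (size u).
  by rewrite (nth_map (0, 0)) ?nth_zip // size_zip -eq_uv minnn.
by rewrite !nth_default ?addr0 ?size_seqadd -?eq_uv ?minnn.
Qed.

Lemma nth_seqsub (u v : seq rat) t : size u = size v -> (seqsub u v)`_t = u`_t - v`_t.
Proof.
move=> eq_uv; have [lt_t|le_t] := ltnP t (size u).
  by rewrite (nth_map (0, 0)) ?nth_zip // size_zip -eq_uv minnn.
by rewrite !nth_default ?subr0 ?size_seqsub -?eq_uv ?minnn.
Qed.

Lemma nth_seqhalf (u : seq rat) t : (seqhalf u)`_t = u`_t / 2.
Proof.
have [lt_t|le_t] := ltnP t (size u); first by rewrite (nth_map 0).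
by rewrite !nth_default ?mul0r ?size_seqhalf.
Qed.

Section Bilinearity.
Variables (u v w : seq rat) (n : nat).
Hypotheses (eq_uv : size u = size v) (eq_uw : size u = size w).

Let size_add : size (seqadd u v) = size u.
Proof. by rewrite size_seqadd eq_uv minnn. Qed.

Let size_sub : size (seqsub u v) = size u.
Proof. by rewrite size_seqsub eq_uv minnn. Qed.

Lemma acorrDl : acorr (seqadd u v) w n = acorr u w n + acorr v w n.
Proof.
rewrite !acorrE ?size_add -?eq_uv // -big_split.
by apply: eq_bigr => t _; rewrite nth_seqadd // mulrDl.
Qed.

Lemma acorrBl : acorr (seqsub u v) w n = acorr u w n - acorr v w n.
Proof.
rewrite !acorrE ?size_sub -?eq_uv // -sumrB.
by apply: eq_bigr => t _; rewrite nth_seqsub // mulrBl.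
Qed.

Lemma acorrDr : acorr w (seqadd u v) n = acorr w u n + acorr w v n.
Proof.
rewrite !acorrE ?size_add -?eq_uv // -big_split.
by apply: eq_bigr => t _; rewrite nth_seqadd // mulrDr.
Qed.

Lemma acorrBr : acorr w (seqsub u v) n = acorr w u n - acorr w v n.
Proof.
rewrite !acorrE ?size_sub -?eq_uv // -sumrB.
by apply: eq_bigr => t _; rewrite nth_seqsub // mulrBr.
Qed.

End Bilinearity.

Lemma sum_nat_mul (F : nat -> rat) N M :
  \sum_(0 <= t < N * M) F t = \sum_(0 <= i < N) \sum_(0 <= j < M) F (i * M + j)%N.
Proof.
rewrite big_nat_mul; apply: eq_bigr => i _.
rewrite mulSn [(M + _)%N]addnC -{1}[(i * M)%N]add0n big_addn addKn.
by apply: eq_bigr => j _; rewrite addnC.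
Qed.

Lemma size_kron (u v : seq rat) : size (kron u v) = (size u * size v)%N.
Proof. by elim: u => //= x u IHu; rewrite size_cat size_map IHu mulSn. Qed.

Lemma nth_kron (u v : seq rat) M i j : size v = M -> (j < M)%N ->
  (kron u v)`_(i * M + j) = u`_i * v`_j.
Proof.
move=> <- lt_j; elim: u i => [|x u IHu] [|i] /=.
- by rewrite nth_nil mul0r.
- by rewrite nth_nil mul0r.
- by rewrite nth_cat size_map lt_j (nth_map 0).
by rewrite nth_cat size_map mulSn -addnA ltnNge leq_addr /= addKn IHu.
Qed.

Lemma acorr_kron (p q u v : seq rat) (n : nat) :
  size p = size q -> size u = size v ->
  acorr (kron p u) (kron q v) n =
  \sum_(0 <= j < size u) u`_j * v`_((j + n) %% size u) * acorr p q ((j + n) %/ size u)%N.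
Proof.
move=> eq_pq eq_uv; set M := size u.
have [M0|M_gt0] := posnP M; first by rewrite acorr_ge ?size_kron -/M ?M0 ?muln0 // big_geq.
rewrite acorrE ?size_kron -?eq_pq -?eq_uv // sum_nat_mul exchange_big_nat -/M.
apply: eq_big_nat => j /andP[_ lt_jM].
rewrite (acorrE _ eq_pq) mulr_sumr; apply: eq_bigr => i _.
have -> : (i * M + j + n = (i + (j + n) %/ M) * M + (j + n) %% M)%N.
  by rewrite -addnA {1}(divn_eq (j + n) M) addnA -mulnDl.
by rewrite (nth_kron p i (erefl M)) // (nth_kron q _ (esym eq_uv)) ?ltn_pmod //; ring.
Qed.

(* Position j of a block moves to position j + r of the k-th next block if
   j < M - r, and to position j - (M - r) of the (k+1)-th one otherwise. *)
Lemma sum_shift_mod (h : nat -> nat -> rat) (G : nat -> rat) M n : (0 < M)%N ->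
  \sum_(0 <= j < M) h j ((j + n) %% M)%N * G ((j + n) %/ M)%N =
  (\sum_(0 <= j < M - n %% M) h j (j + n %% M)%N) * G (n %/ M)%N
  + (\sum_(0 <= j < n %% M) h (j + (M - n %% M))%N j) * G (n %/ M).+1.
Proof.
move=> M_gt0; set r := (n %% M)%N; set k := (n %/ M)%N.
have lt_rM : (r < M)%N by rewrite ltn_pmod.
have block q i : (i < M)%N -> ((q * M + i) %/ M = q)%N /\ ((q * M + i) %% M = i)%N.
  by move=> lt_iM; rewrite divnMDl // divn_small // addn0 modnMDl modn_small.
rewrite !mulr_suml (@big_cat_nat _ _ _ (M - r)) ?leq_subr //=; congr (_ + _).
  apply: eq_big_nat => j /andP[_ lt_j].
  suff [-> ->] : ((j + n) %/ M = k)%N /\ ((j + n) %% M = j + r)%N by [].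
  by rewrite {1 2}(divn_eq n M) -/r -/k addnCA; apply: block; lia.
rewrite -{1}[(M - r)%N]add0n big_addn (_ : (M - (M - r)) = r)%N; last by lia.
apply: eq_big_nat => j /andP[_ lt_j].
suff [-> ->] : ((j + (M - r) + n) %/ M = k.+1)%N /\ ((j + (M - r) + n) %% M = j)%N by [].
rewrite {1 2}(divn_eq n M) -/r -/k (_ : _ + _ = k.+1 * M + j)%N; last by lia.
by apply: block; lia.
Qed.

Lemma acorr_tail_vanish (g : seq rat) Z :
  g`_(size g).-1 != 0 ->
  (forall k, (size g - Z <= k < size g)%N -> acorr g g k = 0) ->
  forall m, (m < Z)%N -> g`_m = 0.
Proof.
move=> g_last g_tail; elim/ltn_ind=> m IHm lt_mZ.
have [lt_mN|le_Nm] := ltnP m (size g); last exact: nth_default.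
have eN : size g = (size g).-1.+1 by rewrite prednK //; lia.
have : acorr g g ((size g).-1 - m)%N = 0 by apply: g_tail; lia.
rewrite /acorr (_ : size g - ((size g).-1 - m) = m.+1)%N; last by lia.
rewrite big_nat_recr //= big1_seq ?add0r => [|i]; last first.
  by rewrite mem_index_iota => /andP[_ lt_im]; rewrite IHm ?mul0r //; lia.
rewrite (_ : m + _ = (size g).-1)%N; last by lia.
by move/eqP; rewrite mulf_eq0 (negbTE g_last) orbF => /eqP.
Qed.

Section TailSymmetry.
Variables (c d : seq rat) (Z : nat).
Hypotheses (eq_cd : size c = size d) (c_last : c`_(size c).-1 != 0).
Hypothesis tail_auto :
  forall k, (size c - Z <= k < size c)%N -> acorr c c k + acorr d d k = 0.
Hypothesis tail_cross :
  forall k, (size c - Z <= k < size c)%N -> acorr c d k + acorr d c k = 0.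

Lemma head_eq_or_opp :
  (forall i, (i < Z)%N -> d`_i = c`_i) \/ (forall i, (i < Z)%N -> d`_i = - c`_i).
Proof.
set N := size c.
have size_add : size (seqadd c d) = N by rewrite size_seqadd -eq_cd minnn.
have size_sub : size (seqsub c d) = N by rewrite size_seqsub -eq_cd minnn.
have [sum_last|diff_last] : c`_N.-1 + d`_N.-1 != 0 \/ c`_N.-1 - d`_N.-1 != 0.
- have [sum0|] := eqVneq (c`_N.-1 + d`_N.-1) 0; last by left.
  by right; apply: contra_neq c_last => diff0; lra.
- right=> i lt_iZ; suff : (seqadd c d)`_i = 0 by rewrite nth_seqadd //; lra.
  apply: (acorr_tail_vanish (Z := Z)) => //; first by rewrite size_add nth_seqadd.
  move=> k; rewrite size_add => /[dup] /tail_auto auto0 /tail_cross cross0.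
  by rewrite acorrDl ?size_add // !acorrDr //; lra.
- left=> i lt_iZ; suff : (seqsub c d)`_i = 0 by rewrite nth_seqsub //; lra.
  apply: (acorr_tail_vanish (Z := Z)) => //; first by rewrite size_sub nth_seqsub.
  move=> k; rewrite size_sub => /[dup] /tail_auto auto0 /tail_cross cross0.
  by rewrite acorrBl ?size_sub // !acorrBr //; lra.
Qed.

Lemma acorr_rev_self_tail (s : nat) : (size c - Z <= s)%N ->
  acorr c (rev c) s = acorr d (rev d) s.
Proof.
move=> le_s; rewrite /acorr -eq_cd; apply: eq_big_nat => i /andP[_ lt_i].
have lt_isN : (i + s < size c)%N by lia.
rewrite !nth_rev -?eq_cd //.
have lt_iZ : (i < Z)%N by lia.
have lt_jZ : (size c - (i + s).+1 < Z)%N by lia.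
by case: head_eq_or_opp => eq_dc; rewrite !eq_dc // mulrNN.
Qed.

End TailSymmetry.

Lemma binary_nth_neq0 (u : seq rat) i : binary u -> (i < size u)%N -> u`_i != 0.
Proof.
move=> /allP bin_u lt_i.
by case/orP: (bin_u _ (mem_nth 0 lt_i)) => /eqP->; rewrite ?oppr_eq0 oner_eq0.
Qed.

Lemma binCZCP_tail N Z (c d : seq rat) (s : nat) :
  binCZCP N Z c d -> (N - Z <= s)%N ->
  [/\ acorr c d s + acorr d c s = 0,
      acorr c (rev c) s = acorr d (rev d) s
    & acorr (rev c) c s = acorr (rev d) d s].
Proof.
move=> [[sc sd czcp_auto czcp_cross] bin_c bin_d] le_s.
have [N0|N_gt0] := posnP N.
  by rewrite !acorr_ge ?size_rev ?sc ?sd ?N0 ?addr0.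
have tail_auto k : (N - Z <= k < N)%N -> acorr c c k + acorr d d k = 0.
  by move=> lt_k; apply: (czcp_auto k); rewrite /inT2 /= lt_k orbT.
have tail_cross k : (N - Z <= k < N)%N -> acorr c d k + acorr d c k = 0.
  by move=> lt_k; apply: (czcp_cross k).
split.
- have [lt_sN|le_Ns] := ltnP s N; first by rewrite tail_cross ?le_s.
  by rewrite !acorr_ge ?sc ?sd ?addr0.
- apply: (acorr_rev_self_tail (Z := Z)); rewrite ?sc ?sd //.
  by apply: binary_nth_neq0; rewrite // sc prednK.
rewrite -{2}(revK c) -{2}(revK d).
apply: (acorr_rev_self_tail (Z := Z)); rewrite ?size_rev ?sc ?sd //.
- by rewrite nth_rev ?sc ?prednK // subnn; apply: binary_nth_neq0; rewrite ?sc.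
- by move=> k lt_k; rewrite !acorr_rev ?sc ?sd // tail_auto.
by move=> k lt_k; rewrite !acorr_rev ?sc ?sd // addrC tail_cross.
Qed.

Section TurynExpansion.
Variables (c d x y : seq rat).
Hypotheses (eq_cd : size c = size d) (eq_xy : size x = size y).

Local Notation e := (seqsub (kron c x) (kron (rev d) y)).
Local Notation f := (seqadd (kron d x) (kron (rev c) y)).
Local Notation M := (size x).

Let size_krons :
  [/\ size (kron c x) = size (kron (rev d) y), size (kron c x) = size (kron d x)
    & size (kron c x) = size (kron (rev c) y)].
Proof. by rewrite !size_kron !size_rev -eq_cd -eq_xy. Qed.

Lemma turyn_aacorr (n : nat) :
  acorr e e n + acorr f f n =
  \sum_(0 <= j < M) (x`_j * x`_((j + n) %% M)%N + y`_j * y`_((j + n) %% M)%N)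
                    * (acorr c c ((j + n) %/ M)%N + acorr d d ((j + n) %/ M)%N).
Proof.
have [s1 s2 s3] := size_krons.
rewrite acorrBl ?size_seqsub -?s1 ?minnn // !acorrBr // acorrDl ?size_seqadd -?s2 -?s3 ?minnn //.
rewrite !acorrDr -?s2 -?s3 //.
rewrite !acorr_kron ?size_rev // -eq_xy -!sumrB -!big_split.
apply: eq_bigr => j _.
rewrite !acorr_rev ?(acorr_rev_swap _ eq_cd) ?(acorr_rev_swapl _ (esym eq_cd)) //.
by rewrite /=; ring.
Qed.

Lemma turyn_cross (n : nat) :
  acorr e f n + acorr f e n =
  \sum_(0 <= j < M)
    ((x`_j * x`_((j + n) %% M)%N - y`_j * y`_((j + n) %% M)%N)
       * (acorr c d ((j + n) %/ M)%N + acorr d c ((j + n) %/ M)%N)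
     + x`_j * y`_((j + n) %% M)%N
       * (acorr c (rev c) ((j + n) %/ M)%N - acorr d (rev d) ((j + n) %/ M)%N)
     + y`_j * x`_((j + n) %% M)%N
       * (acorr (rev c) c ((j + n) %/ M)%N - acorr (rev d) d ((j + n) %/ M)%N)).
Proof.
have [s1 s2 s3] := size_krons.
rewrite acorrBl ?size_seqadd -?s2 -?s3 ?minnn // !acorrDr -?s2 -?s3 //.
rewrite acorrDl ?size_seqsub -?s1 -?s2 -?s3 ?minnn // !acorrBr -?s2 -?s3 //.
rewrite !acorr_kron ?size_rev // -eq_xy -!sumrB -!big_split -sumrB -big_split.
apply: eq_bigr => j _.
by rewrite !acorr_rev ?eq_cd //=; ring.
Qed.

End TurynExpansion.

Lemma aacorr_abs (u : seq rat) (tau : int) : aacorr u tau = aacorr u `|tau|%N.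
Proof. by case: tau => n //; rewrite /aacorr acorrN. Qed.

Lemma acorr_sym_abs (u v : seq rat) (tau : int) : size u = size v ->
  acorr u v tau + acorr v u tau = acorr u v `|tau|%N + acorr v u `|tau|%N.
Proof. by case: tau => n // eq_uv; rewrite !acorrN // addrC. Qed.

Lemma acorr_nil (v : seq rat) (tau : int) : acorr [::] v tau = 0.
Proof. by case: tau => n; rewrite /acorr big_geq ?sub0n. Qed.

Lemma size_turyn (a b c d : seq rat) : size a = size b -> size c = size d ->
  size (turyn_e a b c d) = (size c * size a)%N /\
  size (turyn_f a b c d) = (size c * size a)%N.
Proof.
move=> eq_ab eq_cd.
by rewrite size_seqsub size_seqadd !size_kron !size_rev !size_seqhalf size_seqadd
  size_seqsub -eq_ab -eq_cd !minnn.
Qed.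

Lemma inT_block N Z M k : (0 < M)%N ->
  (inT1 (Z * M) (k * M) || inT2 (N * M) (Z * M) (k * M)) = (inT1 Z k || inT2 N Z k).
Proof.
by move=> M_gt0; rewrite /inT1 /inT2 -mulnBl !leq_pmul2r // ltn_pmul2r // muln_gt0 M_gt0 andbT.
Qed.

Lemma turyn_aacorr_gcp (a b c d : seq rat) (n : nat) :
  size a = size b -> (0 < size a)%N -> size c = size d ->
  (forall r : nat, (0 < r < size a)%N -> acorr a a r + acorr b b r = 0) ->
  acorr (turyn_e a b c d) (turyn_e a b c d) n + acorr (turyn_f a b c d) (turyn_f a b c d) n =
  if (n %% size a == 0)%N
  then (acorr a a 0%N + acorr b b 0%N) / 2
       * (acorr c c (n %/ size a)%N + acorr d d (n %/ size a)%N)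
  else 0.
Proof.
move=> eq_ab a_gt0 eq_cd gcp; set M := size a.
set x := seqhalf (seqadd a b); set y := seqhalf (seqsub b a).
have size_x : size x = M by rewrite size_seqhalf size_seqadd -eq_ab minnn.
have size_y : size y = M by rewrite size_seqhalf size_seqsub -eq_ab minnn.
pose h j k := (a`_j * a`_k + b`_j * b`_k) / 2.
have weight j k : x`_j * x`_k + y`_j * y`_k = h j k.
  by rewrite !nth_seqhalf !nth_seqadd ?nth_seqsub // /h; field.
have sum_head r : \sum_(0 <= j < M - r) h j (j + r)%N = (acorr a a r + acorr b b r) / 2.
  by rewrite /acorr -eq_ab -mulr_suml -big_split.
have sum_tail r : (r <= M)%N ->
    \sum_(0 <= j < r) h (j + (M - r))%N j = (acorr a a (M - r)%N + acorr b b (M - r)%N) / 2.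
  move=> le_rM; rewrite /acorr -eq_ab subKn // -mulr_suml -big_split.
  by congr (_ / 2); apply: eq_bigr => j _ /=; ring.
rewrite /turyn_e /turyn_f -/x -/y turyn_aacorr ?size_x ?size_y //.
under eq_bigr do rewrite weight.
rewrite (sum_shift_mod h (fun s => acorr c c s + acorr d d s)) // sum_head sum_tail; last first.
  exact/ltnW/ltn_pmod.
have lt_rM : (n %% M < M)%N by rewrite ltn_pmod.
case: eqP => [r0|/eqP r_neq0].
  by rewrite r0 subn0 (@acorr_ge a a M) ?(@acorr_ge b b M) -?eq_ab // addr0 mul0r addr0.
by rewrite !gcp ?mul0r ?addr0 // -?lt0n ?r_neq0 ?lt_rM //; lia.
Qed.

Theorem theorem6 (M N Z : nat) (a b c d : seq rat) :
  binGCP M a b -> binCZCP N Z c d ->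
  CZCP (N * M) (Z * M) (turyn_e a b c d) (turyn_f a b c d).
Proof.
move=> gcp_ab czcp_cd; have [sa sb _ _ gcp] := gcp_ab; have [[sc sd czcp_auto _] _ _] := czcp_cd.
have [] := size_turyn (etrans sa (esym sb)) (etrans sc (esym sd)); rewrite sa sc.
set e := turyn_e a b c d; set f := turyn_f a b c d => se sf.
have [NM0|NM_gt0] := posnP (N * M).
  move: se sf; rewrite NM0 => /size0nil -> /size0nil ->.
  by split=> // tau _; rewrite /aacorr !acorr_nil addr0.
have M_gt0 : (0 < M)%N by move: NM_gt0; rewrite muln_gt0 => /andP[].
split=> // tau.
  rewrite (aacorr_abs e) (aacorr_abs f); move: `|tau|%N => n n_in.
  rewrite /aacorr turyn_aacorr_gcp ?sa ?sb ?sc ?sd //; last first.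
    by move=> r /andP[r_gt0 _]; apply: (gcp r); rewrite -lt0n.
  case: eqP => // r0; move: n_in; rewrite (divn_eq n M) r0 addn0 inT_block // => k_in.
  by rewrite mulnK // (czcp_auto (n %/ M)%N k_in) mulr0.
rewrite acorr_sym_abs ?se ?sf //; move: `|tau|%N => n n_in.
rewrite /e /f /turyn_e /turyn_f turyn_cross ?sc ?sd // ?size_seqhalf; last first.
  by rewrite size_seqadd size_seqsub minnC.
rewrite size_seqadd sa sb minnn; apply: big1 => j _.
have [|cross0 rev_c rev_d] := binCZCP_tail (s := (j + n) %/ M) czcp_cd.
  by rewrite leq_divRL // mulnBl; case/andP: n_in => le_n _; lia.
by rewrite cross0 rev_c rev_d !subrr !mulr0 !addr0.
Qed.
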